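(* Consider the setting described in the context. Minimizing the cost $I[S^K;Z^K]-h[H]$ over the variables $\Sigma^H>0$, $\Sigma^Z_K>0$ and block-diagonal $\tilde G_K=\mathrm{diag}(G(1),\dots,G(K))$ is equivalent to solving the following convex program: $$\min_{\Sigma^H,\ \Pi_K,\ \Sigma^Z_K,\ \tilde G_K}\ -\log\det(\Sigma^H)-\log\det(\Pi_K)\quad\text{s.t.}\quad \Pi_K\ge 0,\quad \begin{bmatrix}\Sigma^S_K-\Pi_K & (\Sigma^{SZ}_K)^\top\\ \Sigma^{SZ}_K & \Sigma^Z_K\end{bmatrix}\ge 0,$$ where $\Sigma^{SZ}_K=\tilde G_K\tilde C_KQ\tilde D_K^\top$ and $\Pi_K\in\mathbb{R}^{Kn_s\times Kn_s}$ is symmetric.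
   Context: Let $n_x,n_y,n_u,n_s,K\in\mathbb{N}$, $K\ge2$. Consider the system $X(k+1)=AX(k)+BU(k)+T(k)$, $Y(k)=CX(k)+W(k)$, $S(k)=DX(k)$ with $X(k)\in\mathbb{R}^{n_x}$, $Y(k)\in\mathbb{R}^{n_y}$, deterministic $U(k)\in\mathbb{R}^{n_u}$, $S(k)\in\mathbb{R}^{n_s}$, $D$ of full row rank; $T(k)$, $W(k)$ i.i.d. zero-mean Gaussian with covariances $\Sigma^T>0$, $\Sigma^W>0$; $X(1)\sim\mathcal{N}[\mu^X_1,\Sigma^X_1]$, $\Sigma^X_1>0$; all mutually independent. The disclosed output is $Z(k)=G(k)Y(k)+V(k)$ with $G(k)\in\mathbb{R}^{n_y\times n_y}$ deterministic and $V^K=(V(1)^\top,\dots,V(K)^\top)^\top$ zero-mean Gaussian, independent of everything else; the disclosed input is $R(k)=U(k)+H(k)$ where the stacked input noise $H\in\mathbb{R}^m$ is zero-mean Gaussian with covariance $\Sigma^H>0$, independent of everything else. Stacked vectors $Z^K,S^K$ collect $Z(1),\dots,Z(K)$ and $S(1),\dots,S(K)$. Let $\tilde C_K=I_K\otimes C$, $\tilde D_K=I_K\otimes D$, $F_K=\begin{bmatrix} I & A^\top &\cdots & (A^\top)^{K-1}\end{bmatrix}^\top$, $J_K\in\mathbb{R}^{Kn_x\times(K-1)n_x}$ with $(i,j)$ block $A^{i-j-1}$ if $i>j$ ($A^0=I$) and $\mathbf{0}$ otherwise, and $Q=F_K\Sigma^X_1F_K^\top+J_K(I_{K-1}\otimes\Sigma^T)J_K^\top$.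 Then $\Sigma^S_K=\tilde D_KQ\tilde D_K^\top$ is the covariance of $S^K$, $\Sigma^{SZ}_K=\tilde G_K\tilde C_KQ\tilde D_K^\top$ is the cross-covariance of $Z^K$ and $S^K$, and $\Sigma^Z_K$ denotes the covariance of $Z^K$ (which determines the covariance of $V^K$ via $\Sigma^V_K=\Sigma^Z_K-\tilde G_K(\tilde C_KQ\tilde C_K^\top+I_K\otimes\Sigma^W)\tilde G_K^\top$). Since all vectors are jointly Gaussian, the mutual information and differential entropy (logarithms base 2) are $I[S^K;Z^K]=\tfrac12\log\det\Sigma^S_K-\tfrac12\log\det\big(\Sigma^S_K-(\Sigma^{SZ}_K)^\top(\Sigma^Z_K)^{-1}\Sigma^{SZ}_K\big)$ and $h[H]=\tfrac12\log\det\Sigma^H+\tfrac m2+\tfrac m2\log(2\pi)$; the cost is regarded as a function of $(\Sigma^H,\Sigma^Z_K,\tilde G_K)$ through these formulas. *)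

From mathcomp Require Import all_boot all_order all_algebra.
From mathcomp Require Import all_classical all_reals all_analysis.
Set Implicit Arguments. Unset Strict Implicit. Unset Printing Implicit Defensive.
Import Order.TTheory GRing.Theory Num.Theory.
Local Open Scope ring_scope.

Section Defs.
Variable R : realType.

Definition log2 (x : R) : R := ln x / ln 2.

(* Block decomposition of an index of a stacked vector 'I_(K * n):
   (block number, position inside the block); inverse of mxvec_index,
   i.e. the standard stacking  k = block * n + position. *)
Definition blk_of {K n : nat} (k : 'I_(K * n)) : 'I_K * 'I_n :=
  enum_val (cast_ord (esym (mxvec_cast K n)) k).

Definition blockmx {K L p q : nat} (Bf : 'I_K -> 'I_L -> 'M[R]_(p, q))
  : 'M[R]_(K * p, L * q) :=
  \matrix_(i, j) Bf (blk_of i).1 (blk_of j).1 (blk_of i).2 (blk_of j).2.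

Definition kronI (K : nat) {p q : nat} (M : 'M[R]_(p, q)) : 'M[R]_(K * p, K * q) :=
  blockmx (fun a b : 'I_K => if a == b then M else 0).

Definition blockdiag {K n : nat} (G : 'M[R]_(K * n)) : Prop :=
  forall i j : 'I_(K * n), (blk_of i).1 != (blk_of j).1 -> G i j = 0.

Definition psd {n : nat} (M : 'M[R]_n) : Prop :=
  M^T = M /\ forall x : 'cV[R]_n, 0 <= (x^T *m M *m x) 0 0.
Definition posdef {n : nat} (M : 'M[R]_n) : Prop :=
  M^T = M /\ forall x : 'cV[R]_n, x != 0 -> 0 < (x^T *m M *m x) 0 0.

Definition FK (K : nat) {nx : nat} (A : 'M[R]_nx) : 'M[R]_(K * nx, nx) :=
  \matrix_(i, j) (A ^+ (blk_of i).1) (blk_of i).2 j.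

Definition JK (K : nat) {nx : nat} (A : 'M[R]_nx) : 'M[R]_(K * nx, K.-1 * nx) :=
  blockmx (fun (a : 'I_K) (b : 'I_K.-1) =>
             if (b < a)%N then A ^+ (a - b - 1)%N else 0).

Definition Qmat (K : nat) {nx : nat} (A S1 ST : 'M[R]_nx) : 'M[R]_(K * nx) :=
  FK K A *m S1 *m (FK K A)^T + JK K A *m kronI K.-1 ST *m (JK K A)^T.

Definition SigmaS (K : nat) {nx ns : nat} (A S1 ST : 'M[R]_nx) (D : 'M[R]_(ns, nx))
  : 'M[R]_(K * ns) :=
  kronI K D *m Qmat K A S1 ST *m (kronI K D)^T.

Definition SigmaSZ (K : nat) {nx ny ns : nat} (A S1 ST : 'M[R]_nx)
  (C : 'M[R]_(ny, nx)) (D : 'M[R]_(ns, nx)) (G : 'M[R]_(K * ny))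
  : 'M[R]_(K * ny, K * ns) :=
  G *m kronI K C *m Qmat K A S1 ST *m (kronI K D)^T.

(* I[S^K; Z^K] via the Gaussian formula (base 2) *)
Definition mutinfo {N M : nat} (SS : 'M[R]_N) (SSZ : 'M[R]_(M, N)) (SZ : 'M[R]_M) : R :=
  log2 (\det SS) / 2 - log2 (\det (SS - SSZ^T *m invmx SZ *m SSZ)) / 2.

(* h[H] for H ~ N(0, SH), H in R^m *)
Definition entropyH {m : nat} (SH : 'M[R]_m) : R :=
  log2 (\det SH) / 2 + m%:R / 2 + m%:R / 2 * log2 (2 * pi).

Definition cost {m N M : nat} (SH : 'M[R]_m) (SS : 'M[R]_N) (SSZ : 'M[R]_(M, N))
  (SZ : 'M[R]_M) : R :=
  mutinfo SS SSZ SZ - entropyH SH.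

Definition prog_feasible {N M : nat} (SS : 'M[R]_N) (SSZ : 'M[R]_(M, N))
  (SZ : 'M[R]_M) (Pi : 'M[R]_N) : Prop :=
  Pi^T = Pi /\ psd Pi /\ psd (block_mx (SS - Pi) SSZ^T SSZ SZ).

Definition prog_obj {m N : nat} (SH : 'M[R]_m) (Pi : 'M[R]_N) : R :=
  - log2 (\det SH) - log2 (\det Pi).

End Defs.

Arguments FK {R} K {nx}.
Arguments JK {R} K {nx}.
Arguments kronI {R} K {p q}.
Arguments Qmat {R} K {nx}.
Arguments SigmaS {R} K {nx ns}.
Arguments SigmaSZ {R} K {nx ny ns}.

(* Write M for the Schur complement SS - SSZ^T SZ^-1 SSZ.  As SZ is positive
   definite, the block constraint of the program says exactly that M - Pi is
   positive semidefinite, and the cost differs from c + prog_obj Pi / 2 by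
   (log2 det Pi - log2 det M) / 2.  Everything thus reduces to monotonicity of
   the determinant, det P <= det (P + N) for P > 0 and N >= 0.  This is proved
   by induction on the size: splitting off a 1 x 1 pivot factors both
   determinants through Schur complements, and the Schur complement is
   superadditive because S(P + N) - S(P) is itself the Schur complement of the
   positive semidefinite matrix N + [Z B; B^T B^T Z^-1 B]. *)

From mathcomp Require Import all_boot all_order all_algebra.
From mathcomp Require Import all_classical all_reals all_analysis.
From mathcomp Require Import lra ring.
Set Implicit Arguments. Unset Strict Implicit. Unset Printing Implicit Defensive.
Import Order.TTheory GRing.Theory Num.Theory.
Local Open Scope ring_scope.

Section SchurComplement.
Variable R : comUnitRingType.

Definition schur_compl p q (Z : 'M[R]_p) (B : 'M[R]_(p, q)) (A : 'M[R]_q) : 'M[R]_q :=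
  A - B^T *m invmx Z *m B.

Lemma trmx_schur_compl p q (Z : 'M[R]_p) (B : 'M[R]_(p, q)) (A : 'M[R]_q) :
  Z^T = Z -> (schur_compl Z B A)^T = schur_compl Z B A^T.
Proof.
by move=> ZT; rewrite linearB /= !trmx_mul trmxK trmx_inv ZT mulmxA.
Qed.

Lemma block_mx_LDU p q (Z : 'M[R]_p) (B : 'M[R]_(p, q)) (C : 'M[R]_(q, p))
    (A : 'M[R]_q) :
  Z \in unitmx ->
  block_mx Z B C A =
    block_mx 1%:M 0 (C *m invmx Z) 1%:M
    *m block_mx Z 0 0 (A - C *m invmx Z *m B)
    *m block_mx 1%:M (invmx Z *m B) 0 1%:M.
Proof.
move=> Zu; rewrite !mulmx_block !(mul1mx, mulmx1, mul0mx, mulmx0, addr0, add0r).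
rewrite mulmxA mulmxV // mul1mx -!mulmxA mulVmx // mulmx1.
by rewrite mulKVmx // mulmxA addrC subrK.
Qed.

Lemma det_block_mx_schur p q (Z : 'M[R]_p) (B : 'M[R]_(p, q))
    (C : 'M[R]_(q, p)) (A : 'M[R]_q) :
  Z \in unitmx -> \det (block_mx Z B C A) = \det Z * \det (A - C *m invmx Z *m B).
Proof.
move=> Zu; rewrite block_mx_LDU // !det_mulmx det_lblock det_ublock det_ublock.
by rewrite !det1 !mul1r mulr1.
Qed.

Lemma quad_block_mx_schur p q (Z : 'M[R]_p) (B : 'M[R]_(p, q)) (A : 'M[R]_q)
    (u : 'cV[R]_p) (v : 'cV[R]_q) :
  Z \in unitmx -> Z^T = Z ->
  (col_mx u v)^T *m block_mx Z B B^T A *m col_mx u v =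
    (u + invmx Z *m B *m v)^T *m Z *m (u + invmx Z *m B *m v)
    + v^T *m schur_compl Z B A *m v.
Proof.
move=> Zu ZT; rewrite block_mx_LDU //.
set L := block_mx 1%:M (invmx Z *m B) 0 1%:M.
have -> : block_mx 1%:M 0 (B^T *m invmx Z) 1%:M = L^T.
  by rewrite tr_block_mx !trmx1 trmx0 trmx_mul trmx_inv ZT.
rewrite !mulmxA -trmx_mul -(mulmxA _ L) mul_block_col.
rewrite !(mul1mx, mul0mx, add0r) tr_col_mx mul_row_block mul_row_col.
by rewrite !(mulmx0, mul0mx, addr0, add0r).
Qed.

Lemma quad_block_mx_swap p q (a : 'M[R]_p) (b : 'M[R]_(p, q))
    (c : 'M[R]_(q, p)) (d : 'M[R]_q) (u : 'cV[R]_p) (v : 'cV[R]_q) :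
  (col_mx u v)^T *m block_mx a b c d *m col_mx u v =
  (col_mx v u)^T *m block_mx d c b a *m col_mx v u.
Proof.
rewrite !tr_col_mx !mul_row_block !mul_row_col !mulmxDl.
by rewrite addrC (addrC (v^T *m d *m v)) (addrC (v^T *m c *m u)).
Qed.

Lemma sym_schur_compl p q (Z : 'M[R]_p) (B : 'M[R]_(p, q)) (A : 'M[R]_q) :
  Z^T = Z -> (schur_compl Z B A)^T = schur_compl Z B A <-> A^T = A.
Proof. by move=> ZT; rewrite trmx_schur_compl //; split=> [/addIr | ->]. Qed.

Lemma sym_block_mx p q (Z : 'M[R]_p) (B : 'M[R]_(p, q)) (A : 'M[R]_q) :
  Z^T = Z -> (block_mx Z B B^T A)^T = block_mx Z B B^T A <-> A^T = A.
Proof.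
by move=> ZT; rewrite tr_block_mx trmxK ZT; split=> [/eq_block_mx[_ _ _ ->] | ->].
Qed.

Lemma sym_block_mxE p q (P : 'M[R]_(p + q)) :
  P^T = P -> P = block_mx (ulsubmx P) (ursubmx P) (ursubmx P)^T (drsubmx P).
Proof. by move=> PT; rewrite trmx_ursub PT submxK. Qed.

Lemma quad_col_mx0 p q (a : 'M[R]_p) (b : 'M[R]_(p, q)) (c : 'M[R]_(q, p))
    (d : 'M[R]_q) (u : 'cV[R]_p) :
  (col_mx u 0)^T *m block_mx a b c d *m col_mx u 0 = u^T *m a *m u.
Proof.
rewrite tr_col_mx trmx0 mul_row_block mul_row_col.
by rewrite !(mul0mx, mulmx0, addr0).
Qed.

End SchurComplement.

Lemma sqr_lin_ge0_eq0 (F : realFieldType) (s c : F) :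
  (forall t, 0 <= 2 * t * s + t ^+ 2 * c) -> s = 0.
Proof.
move=> h; set k := (1 + `|c|)^-1.
have k_gt0 : 0 < k by rewrite invr_gt0 ltr_pwDl.
have kc_lt1 : k * c < 1.
  have : k * (1 + `|c|) = 1 by rewrite mulVf // gt_eqF // ltr_pwDl.
  have := ler_wpM2l (ltW k_gt0) (ler_norm c); nra.
have := h (- s * k).
have -> : 2 * (- s * k) * s + (- s * k) ^+ 2 * c = s ^+ 2 * (k * (k * c - 2)) by ring.
rewrite nmulr_lge0; last by rewrite pmulr_rlt0 //; lra.
by move=> s2_le0; apply/eqP; rewrite -sqrf_eq0 eq_le s2_le0 sqr_ge0.
Qed.

Section SemidefiniteMatrices.
Variable R : realType.

Lemma posdef_psd n (P : 'M[R]_n) : posdef P -> psd P.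
Proof.
case=> PT HP; split=> // x; have [->|/HP/ltW //] := eqVneq x 0.
by rewrite mulmx0 mxE.
Qed.

Lemma psd0 n : psd (0 : 'M[R]_n).
Proof. by split=> [|x]; rewrite ?trmx0 // mulmx0 mul0mx mxE. Qed.

Lemma psdD n (P N : 'M[R]_n) : psd P -> psd N -> psd (P + N).
Proof.
case=> PT HP [NT HN]; split=> [|x]; first by rewrite linearD /= PT NT.
by rewrite mulmxDr mulmxDl mxE addr_ge0.
Qed.

Lemma posdef_add_psd n (P N : 'M[R]_n) : posdef P -> psd N -> posdef (P + N).
Proof.
case=> PT HP [NT HN]; split=> [|x x0]; first by rewrite linearD /= PT NT.
by rewrite mulmxDr mulmxDl mxE; have := HN x; have := HP x x0; lra.
Qed.

Lemma posdef_unitmx n (P : 'M[R]_n) : posdef P -> P \in unitmx.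
Proof.
case=> _ HP; rewrite unitmxE unitfE; apply/negP => /det0P [v v0 vP].
have := HP v^T; rewrite trmx_eq0 trmxK vP mul0mx mxE ltxx.
by move/(_ v0).
Qed.

Lemma psd_quad_eq0 n (P : 'M[R]_n) (x : 'cV[R]_n) :
  psd P -> (x^T *m P *m x) 0 0 = 0 -> P *m x = 0.
Proof.
case=> PT HP qx0; apply/colP => i; rewrite [RHS]mxE.
pose y : 'cV[R]_n := delta_mx i 0.
have yPxE : (y^T *m P *m x) 0 0 = (P *m x) i 0.
  by rewrite -mulmxA trmx_delta -rowE mxE.
have xPyE : (x^T *m P *m y) 0 0 = (P *m x) i 0.
  have -> : (x^T *m P *m y) 0 0 = (x^T *m P *m y)^T 0 0 by rewrite [RHS]mxE.
  by rewrite -yPxE !trmx_mul trmxK PT mulmxA.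
apply: (@sqr_lin_ge0_eq0 _ _ ((y^T *m P *m y) 0 0)) => t.
have := HP (x + t *: y).
rewrite !linearD /= !linearZ /= !mulmxDl -!scalemxAl.
move: qx0 xPyE yPxE; set xPx := x^T *m P *m x; set xPy := x^T *m P *m y.
set yPx := y^T *m P *m x; set yPy := y^T *m P *m y.
rewrite !mxE => -> -> ->; lra.
Qed.

Lemma psd_unitmx_posdef n (P : 'M[R]_n) : psd P -> P \in unitmx -> posdef P.
Proof.
move=> hP Pu; split=> [|x x0]; first by case: hP.
rewrite lt_def (proj2 hP x) andbT; apply: contra x0 => /eqP/(psd_quad_eq0 hP) Px0.
by rewrite -(mulKmx Pu x) Px0 mulmx0.
Qed.

Lemma psd_ulblock p q (Z : 'M[R]_p) (B : 'M[R]_(p, q)) (C : 'M[R]_(q, p))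
    (A : 'M[R]_q) :
  psd (block_mx Z B C A) -> psd Z.
Proof.
case; rewrite tr_block_mx => /eq_block_mx[ZT _ _ _] HP; split=> // u.
by have := HP (col_mx u 0); rewrite quad_col_mx0.
Qed.

Lemma posdef_ulblock p q (Z : 'M[R]_p) (B : 'M[R]_(p, q)) (C : 'M[R]_(q, p))
    (A : 'M[R]_q) :
  posdef (block_mx Z B C A) -> posdef Z.
Proof.
case; rewrite tr_block_mx => /eq_block_mx[ZT _ _ _] HP; split=> // u u0.
by have := HP (col_mx u 0); rewrite quad_col_mx0 col_mx_eq0 (negbTE u0); apply.
Qed.

Lemma psd_mx11_ge0 (a : 'M[R]_1) : psd a -> 0 <= a 0 0.
Proof. by case=> _ /(_ 1%:M); rewrite trmx1 mul1mx mulmx1. Qed.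

Lemma posdef_mx11_gt0 (a : 'M[R]_1) : posdef a -> 0 < a 0 0.
Proof. by case=> _ /(_ 1%:M (oner_neq0 _)); rewrite trmx1 mul1mx mulmx1. Qed.

Lemma psd_schur_complE p q (Z : 'M[R]_p) (B : 'M[R]_(p, q)) (A : 'M[R]_q) :
  posdef Z -> psd (block_mx Z B B^T A) <-> psd (schur_compl Z B A).
Proof.
move=> hZ; have Zu := posdef_unitmx hZ; have [ZT _] := hZ.
rewrite /psd sym_block_mx // sym_schur_compl //.
split=> -[AT HP]; split=> // x.
  have := HP (col_mx (- (invmx Z *m B *m x)) x).
  by rewrite quad_block_mx_schur // addNr trmx0 !mul0mx add0r.
rewrite -[x]vsubmxK quad_block_mx_schur // mxE addr_ge0 //.
by case: (posdef_psd hZ) => _; apply.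
Qed.

Lemma posdef_schur_compl p q (Z : 'M[R]_p) (B : 'M[R]_(p, q)) (A : 'M[R]_q) :
  posdef (block_mx Z B B^T A) -> posdef (schur_compl Z B A).
Proof.
move=> hP; have hZ := posdef_ulblock hP; have Zu := posdef_unitmx hZ.
have [ST _] := (psd_schur_complE B A hZ).1 (posdef_psd hP).
split=> // y y0; have [ZT _] := hZ; have [_ HP] := hP.
have := HP (col_mx (- (invmx Z *m B *m y)) y); rewrite col_mx_eq0 (negbTE y0) andbF.
by rewrite quad_block_mx_schur // addNr trmx0 !mul0mx add0r; apply.
Qed.

Lemma psd_schur_complD p q (Z Z' : 'M[R]_p) (B B' : 'M[R]_(p, q))
    (A A' : 'M[R]_q) :
  posdef Z -> psd (block_mx Z' B' B'^T A') ->
  psd (schur_compl (Z + Z') (B + B') (A + A') - schur_compl Z B A).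
Proof.
move=> hZ hN; have hZZ' := posdef_add_psd hZ (psd_ulblock hN).
set X := B^T *m invmx Z *m B.
have hZX : psd (block_mx Z B B^T X).
  by apply/(psd_schur_complE _ _ hZ); rewrite /schur_compl subrr; apply: psd0.
have -> : schur_compl (Z + Z') (B + B') (A + A') - schur_compl Z B A =
          schur_compl (Z + Z') (B + B') (X + A').
  by rewrite /schur_compl -/X opprB addrC !addrA subrK.
apply/(psd_schur_complE _ _ hZZ'); rewrite linearD.
by rewrite -add_block_mx; apply: psdD.
Qed.

Lemma posdef_det_gt0 n (P : 'M[R]_n) : posdef P -> 0 < \det P.
Proof.
elim: n P => [P _|n IH]; first by rewrite det_mx00.
change (forall P : 'M[R]_(1 + n), posdef P -> 0 < \det P) => P hP.
have [PT _] := hP; rewrite [P](@sym_block_mxE _ 1 n) // in hP *.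
have ha := posdef_ulblock hP.
rewrite det_block_mx_schur ?posdef_unitmx // det_mx11.
by rewrite mulr_gt0 ?posdef_mx11_gt0 // (IH _ (posdef_schur_compl hP)).
Qed.

Lemma ler_det_addr n (P N : 'M[R]_n) : posdef P -> psd N -> \det P <= \det (P + N).
Proof.
elim: n P N => [P N _ _|n IH]; first by rewrite !det_mx00.
change (forall P N : 'M[R]_(1 + n), posdef P -> psd N -> \det P <= \det (P + N)).
move=> P N hP hN.
have [[PT _] [NT _]] := (hP, hN).
rewrite [P](@sym_block_mxE _ 1 n) // [N](@sym_block_mxE _ 1 n) // in hP hN *.
move: hP hN; set a := ulsubmx P; set b := ursubmx P; set d := drsubmx P.
set a' := ulsubmx N; set b' := ursubmx N; set d' := drsubmx N => hP hN.
have ha := posdef_ulblock hP; have ha' := psd_ulblock hN.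
have hS := posdef_schur_compl hP.
have := IH _ _ hS (psd_schur_complD b d ha hN); rewrite subrKC => le_det.
rewrite add_block_mx; have <- : (b + b')^T = b^T + b'^T by rewrite linearD.
have a_unit := posdef_unitmx ha.
have aa'_unit := posdef_unitmx (posdef_add_psd ha ha').
rewrite !det_block_mx_schur //.
have a_gt0 := posdef_mx11_gt0 ha; have S_gt0 := posdef_det_gt0 hS.
rewrite !det_mx11 [X in _ <= X * _]mxE.
apply: ler_pM; [exact: ltW | exact: ltW | | exact: le_det].
by rewrite lerDl psd_mx11_ge0.
Qed.

Lemma psd_block_mx_swap p q (a : 'M[R]_p) (b : 'M[R]_(p, q)) (c : 'M[R]_(q, p))
    (d : 'M[R]_q) :
  psd (block_mx a b c d) -> psd (block_mx d c b a).
Proof.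
case; rewrite tr_block_mx => /eq_block_mx[aT cT bT dT] HP; split.
  by rewrite tr_block_mx aT bT cT dT.
by move=> x; rewrite -[x]vsubmxK -quad_block_mx_swap.
Qed.

Lemma ler_log2 (x y : R) : 0 < x -> x <= y -> log2 x <= log2 y.
Proof.
move=> x_gt0 le_xy; apply: ler_wpM2r.
  by rewrite invr_ge0 ltW // ln_gt0 // ltr1n.
by rewrite ler_ln ?posrE // (lt_le_trans x_gt0).
Qed.

End SemidefiniteMatrices.

Section GaussianProgram.
Variable R : realType.

Lemma trmx_kronI K p q (M : 'M[R]_(p, q)) : (kronI K M)^T = kronI K M^T.
Proof.
apply/matrixP => i j; rewrite /kronI /blockmx !mxE eq_sym.
by case: eqP => _; rewrite !mxE.
Qed.

Lemma SigmaS_sym K nx ns (A S1 ST : 'M[R]_nx) (D : 'M[R]_(ns, nx)) :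
  S1^T = S1 -> ST^T = ST -> (SigmaS K A S1 ST D)^T = SigmaS K A S1 ST D.
Proof.
move=> S1T STT; have QT : (Qmat K A S1 ST)^T = Qmat K A S1 ST.
  by rewrite /Qmat linearD /= !trmx_mul !trmxK trmx_kronI S1T STT !mulmxA.
by rewrite /SigmaS !trmx_mul trmxK QT !mulmxA.
Qed.

Lemma prog_feasibleE N M (SS : 'M[R]_N) (SSZ : 'M[R]_(M, N)) (SZ : 'M[R]_M)
    (Pi : 'M[R]_N) :
  SS^T = SS -> posdef SZ ->
  prog_feasible SS SSZ SZ Pi <-> psd Pi /\ psd (schur_compl SZ SSZ SS - Pi).
Proof.
move=> SST hSZ; have -> : schur_compl SZ SSZ SS - Pi = schur_compl SZ SSZ (SS - Pi).
  by rewrite /schur_compl addrAC.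
split=> [[_ [hPi /psd_block_mx_swap hB]] | [hPi hS]].
  by split=> //; apply/(psd_schur_complE _ _ hSZ).
split; first by case: hPi.
by split=> //; apply/psd_block_mx_swap/(psd_schur_complE _ _ hSZ).
Qed.

Lemma cost_prog_objE m N M (SH : 'M[R]_m) (SS : 'M[R]_N) (SSZ : 'M[R]_(M, N))
    (SZ : 'M[R]_M) (Pi : 'M[R]_N) :
  cost SH SS SSZ SZ =
    log2 (\det SS) / 2 - m%:R / 2 - m%:R / 2 * log2 (2 * pi) + prog_obj SH Pi / 2
    + (log2 (\det Pi) - log2 (\det (schur_compl SZ SSZ SS))) / 2.
Proof. rewrite /cost /mutinfo /entropyH /prog_obj /schur_compl; lra. Qed.

End GaussianProgram.

Theorem lemma2 (R : realType) (nx ny ns K m : nat) (hK : (2 <= K)%N)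
  (A : 'M[R]_nx) (C : 'M[R]_(ny, nx)) (D : 'M[R]_(ns, nx))
  (S1 ST : 'M[R]_nx) (SW : 'M[R]_ny)
  (hD : row_free D) (hS1 : posdef S1) (hST : posdef ST) (hSW : posdef SW) :
  let SS := SigmaS K A S1 ST D in
  let c : R := log2 (\det SS) / 2 - m%:R / 2 - m%:R / 2 * log2 (2 * pi) in
  forall (SH : 'M[R]_m) (SZ : 'M[R]_(K * ny)) (G : 'M[R]_(K * ny)),
    posdef SH -> posdef SZ -> blockdiag G ->
    let SSZ := SigmaSZ K A S1 ST C D G in
    [/\ (* the cost is well defined exactly when the program has a feasible
           point in the domain of -log det *)
        posdef (SS - SSZ^T *m invmx SZ *m SSZ) <->
          (exists Pi, prog_feasible SS SSZ SZ Pi /\ 0 < \det Pi),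
        (* every feasible Pi gives an upper bound *)
        (forall Pi : 'M[R]_(K * ns), prog_feasible SS SSZ SZ Pi -> 0 < \det Pi ->
           cost SH SS SSZ SZ <= c + prog_obj SH Pi / 2)
      & (* and the bound is attained *)
        (posdef (SS - SSZ^T *m invmx SZ *m SSZ) ->
           exists Pi : 'M[R]_(K * ns), [/\ prog_feasible SS SSZ SZ Pi, 0 < \det Pi
             & cost SH SS SSZ SZ = c + prog_obj SH Pi / 2])].
Proof.
move=> SS c SH SZ G hSH hSZ hG SSZ.
have SS_sym : SS^T = SS by apply: SigmaS_sym; [case: hS1 | case: hST].
rewrite -/(schur_compl SZ SSZ SS); set M := schur_compl SZ SSZ SS.
have costE (Pi : 'M[R]_(K * ns)) : cost SH SS SSZ SZ =
    c + prog_obj SH Pi / 2 + (log2 (\det Pi) - log2 (\det M)) / 2.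
  exact: cost_prog_objE.
have feasE (Pi : 'M[R]_(K * ns)) := prog_feasibleE SSZ Pi SS_sym hSZ.
have feas_M : posdef M -> prog_feasible SS SSZ SZ M /\ 0 < \det M.
  move=> hM; split; last exact: posdef_det_gt0.
  by apply/feasE; rewrite subrr; split; [exact: posdef_psd | exact: psd0].
have feas_Pi (Pi : 'M[R]_(K * ns)) : prog_feasible SS SSZ SZ Pi -> 0 < \det Pi ->
    posdef Pi /\ psd (M - Pi).
  move=> /feasE[hPi hMPi] dPi; split=> //.
  by apply: psd_unitmx_posdef; rewrite // unitmxE unitfE gt_eqF.
split.
- split=> [/feas_M hM | [Pi [/feas_Pi hPi /hPi[Pi_pd hMPi]]]]; first by exists M.
  by rewrite -(subrKC Pi M); apply: posdef_add_psd.
- move=> Pi fPi dPi; have [Pi_pd hMPi] := feas_Pi Pi fPi dPi.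
  have := ler_log2 dPi (ler_det_addr Pi_pd hMPi); rewrite subrKC (costE Pi).
  lra.
- move=> /feas_M[fM dM]; exists M; split=> //.
  by rewrite (costE M) subrr mul0r addr0.
Qed.
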